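(* Let $\mathbf{x}$ be an infinite word over a finite alphabet and $n\ge2$ an integer with $r(n,\mathbf{x})\ge r(n-1,\mathbf{x})+2$. Then $r(n,\mathbf{x})\ge 2n+1$.
   Context: For $\mathbf{x}=x_1x_2\ldots$ and $i\le j$, $x_i^j=x_i\cdots x_j$; $r(n,\mathbf{x})=\min\{m\ge1:\ x_i^{i+n-1}=x_{m-n+1}^{m}\text{ for some } 1\le i\le m-n\}$. *)

From mathcomp Require Import all_boot.
Set Implicit Arguments. Unset Strict Implicit. Unset Printing Implicit Defensive.

(* An infinite word x = x_1 x_2 ... over a finite alphabet A is a function
   x : nat -> A; only the values at positions i >= 1 are used. *)

Definition rep_at (A : finType) (n : nat) (x : nat -> A) (m : nat) : bool :=
  (1 <= m) &&
  [exists i : 'I_(m - n).+1,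
     (1 <= i) && [forall k : 'I_n, x (i + k) == x (m - n + 1 + k)]].

Lemma rep_at_exists (A : finType) (n : nat) (x : nat -> A) :
  exists m, rep_at n x m.
Proof.
pose N := (#|A| ^ n).+1.
pose f := fun i : 'I_N => [tuple x (i.+1 + val k) | k < n].
have : ~~ injectiveb f.
  apply/negP => /injectiveP /leq_card.
  by rewrite card_tuple card_ord ltnn.
move/injectivePn => [i [j neqij eqf]].
wlog lt_ij : i j neqij eqf / (i < j)%N.
  move=> H; case: (ltngtP i j) => [lt|lt|eq]; first exact: (H i j).
    by apply: (H j i) => //; rewrite eq_sym.
  by move: neqij; rewrite -(inj_eq val_inj) /= eq eqxx.
exists (j + n).
apply/andP; split; first by rewrite (leq_trans _ (leq_addr _ _)) // (leq_ltn_trans _ lt_ij).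
have Hi : (i.+1 < (j + n - n).+1)%N by rewrite addnK ltnS.
apply/existsP; exists (Ordinal Hi) => /=.
apply/forallP => k.
have := congr1 (fun t : n.-tuple A => tnth t k) eqf.
rewrite !tnth_mktuple => ->.
by rewrite addnK addn1.
Qed.

Definition r (A : finType) (n : nat) (x : nat -> A) : nat :=
  ex_minn (rep_at_exists n x).

From mathcomp Require Import all_boot.
From mathcomp Require Import zify.

Set Implicit Arguments.
Unset Strict Implicit.
Unset Printing Implicit Defensive.

(* Write m = r(n, x) and p = r(n-1, x), and suppose p + 2 <= m <= 2n.  A
   repetition of a factor of length n ending at m is the same thing as a period
   e of x on an interval [i, m] of length n + e, and likewise the one ending at
   p gives a period d on [j, p] of length n - 1 + d.  The assumption m <= 2n
   makes the two intervals overlap on at least d + e - 1 positions, so by the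
   Fine-Wilf theorem one period can be pushed one step beyond its interval: to
   the right when i <= j, producing a repetition of length n ending at p + 1,
   to the left when j < i, producing one ending at m - 1.  Both contradict the
   minimality of m. *)

Lemma eqn_mod_addn_dvd g d e t u :
  g %| d -> g %| e -> t + d = u + e -> t = u %[mod g].
Proof.
move=> /eqP gd /eqP ge tdue.
have dropd : (t + d) %% g = t %% g by rewrite -modnDmr gd addn0.
have drope : (u + e) %% g = u %% g by rewrite -modnDmr ge addn0.
by rewrite -dropd tdue drope.
Qed.

Lemma leq_gcdnl p q : 0 < p -> gcdn p q <= p.
Proof. by move=> p0; apply: dvdn_leq; rewrite ?dvdn_gcdl. Qed.

Lemma leq_gcdnr p q : 0 < q -> gcdn p q <= q.
Proof. by move=> q0; apply: dvdn_leq; rewrite ?dvdn_gcdr. Qed.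

Section Periodicity.
Variables (B : Type) (f : nat -> B).

Definition periodic_on (p a b : nat) :=
  forall t, a <= t -> t + p <= b -> f t = f (t + p).

Lemma periodic_on_sub p a b a' b' :
  periodic_on p a b -> a <= a' -> b' <= b -> periodic_on p a' b'.
Proof. by move=> per aa' b'b t ht htp; apply: per; lia. Qed.

Lemma periodic_on_mul p a b k t :
  periodic_on p a b -> a <= t -> t + k * p <= b -> f t = f (t + k * p).
Proof.
move=> per a_le_t; elim: k => [|k IH] hk; first by rewrite addn0.
rewrite IH; last by lia.
have -> : t + k.+1 * p = t + k * p + p by rewrite mulSn; lia.
by apply: per; lia.
Qed.

Lemma periodic_on_eq_mod p a b t u :
  0 < p -> periodic_on p a b -> a <= t <= b -> a <= u <= b ->
  t = u %[mod p] -> f t = f u.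
Proof.
move=> p0 per; wlog tu : t u / t <= u.
  move=> W ht hu htu; case: (leqP t u) => [|/ltnW] ut; first exact: W.
  by symmetry; apply: W.
move=> /andP [a_le_t _] /andP [_ ub] /eqP; rewrite eq_sym eqn_mod_dvd // => /dvdnP [k uk].
have -> : u = t + k * p by lia.
by apply: (periodic_on_mul per) => //; lia.
Qed.

(* Induction on p + q, replacing the larger period q by q - p on a window
   shortened by p, as in Euclid's algorithm. *)
Theorem fine_wilf p q a b t u :
  0 < p -> 0 < q -> periodic_on p a b -> periodic_on q a b ->
  p + q - gcdn p q <= b - a + 1 -> a <= t <= b -> a <= u <= b ->
  t = u %[mod gcdn p q] -> f t = f u.
Proof.
move: {2}(p + q) (leqnn (p + q)) => s.
elim: s p q b t u => [|s IH] p q b t u pqs p0 q0 perp perq len; first lia.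
wlog pq : p q pqs p0 q0 perp perq len / p <= q.
  move=> W; case: (leqP p q) => [|/ltnW] pq; first exact: (W p q).
  by rewrite gcdnC; apply: (W q p); rewrite // ?(addnC q p) ?(gcdnC q p).
have [eqpq|neqpq] := eqVneq p q.
  by subst q; rewrite gcdnn; exact: periodic_on_eq_mod.
have {neqpq}ltpq : p < q by rewrite ltn_neqAle neqpq pq.
have gE : gcdn p (q - p) = gcdn p q by rewrite -{2}(subnKC pq) gcdnDl.
have g_le_qp : gcdn p q <= q - p.
  by apply: dvdn_leq; rewrite ?subn_gt0 ?dvdn_sub ?dvdn_gcdr ?dvdn_gcdl.
have perqp : periodic_on (q - p) a (b - p).
  move=> v av hv; rewrite (perq v) //; last lia.
  have -> : v + q = v + (q - p) + p by lia.
  by rewrite (perp (v + (q - p))) //; lia.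
have {}IH t' u' : a <= t' <= b - p -> a <= u' <= b - p ->
    t' = u' %[mod gcdn p q] -> f t' = f u'.
  rewrite -gE; apply: (IH p (q - p) (b - p)) => //; try lia.
  by apply: (periodic_on_sub perp); lia.
have fold_back v : a <= v <= b ->
    exists2 v', a <= v' <= b - p & v' = v %[mod gcdn p q] /\ f v' = f v.
  move=> hv; case: (leqP v (b - p)) => vb; first by exists v; [lia | split].
  exists (v - p); first lia.
  split; first by apply: (eqn_mod_addn_dvd (dvdn_gcdl p q) (dvdn0 _)); lia.
  by rewrite (perp (v - p)); [congr f|..]; lia.
move=> /fold_back [t' ht' [tt' <-]] /fold_back [u' hu' [uu' <-]] tu.
by apply: IH => //; rewrite tt' tu uu'.
Qed.

Lemma periodic_on_extend_right p q a b c d :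
  0 < p -> 0 < q -> periodic_on p a b -> periodic_on q c d ->
  c <= a -> b < d -> p + q - gcdn p q <= b - a + 1 ->
  periodic_on p a b.+1.
Proof.
move=> p0 q0 perp perq ca bd len t a_le_t tpb.
have g_le_p := leq_gcdnl q p0.
case: (ltnP (t + p) b.+1) => tpb'; first by apply: perp; lia.
have -> : t + p = b.+1 - q + q by lia.
rewrite -(perq (b.+1 - q)); try lia.
apply: (fine_wilf (a := a) (b := b) p0 q0 perp); try lia.
- by apply: (periodic_on_sub perq); lia.
- by apply: (eqn_mod_addn_dvd (dvdn_gcdl p q) (dvdn_gcdr p q)); lia.
Qed.

Lemma periodic_on_extend_left p q a b c d :
  0 < p -> 0 < q -> periodic_on p a b -> periodic_on q c d ->
  c < a <= d -> d <= b -> p + q - gcdn p q <= d - a + 1 ->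
  periodic_on p a.-1 b.
Proof.
move=> p0 q0 perp perq /andP [ca ad] db len t a_le_t tpb.
have g_le_p := leq_gcdnl q p0; have g_le_q := leq_gcdnr p q0.
case: (ltnP t a) => ta; last by apply: perp; lia.
have -> : t = a.-1 by lia.
rewrite (perq a.-1); try lia.
apply: (fine_wilf (a := a) (b := d) p0 q0); try lia.
- by apply: (periodic_on_sub perp); lia.
- by apply: (periodic_on_sub perq); lia.
- by apply: (eqn_mod_addn_dvd (dvdn_gcdl p q) (dvdn_gcdr p q)); lia.
Qed.

End Periodicity.

Lemma rep_atP (A : finType) n (x : nat -> A) m :
  reflect (exists2 i, 0 < i <= m - n & periodic_on x (m - n + 1 - i) i m)
          (rep_at n x m).
Proof.
apply: (iffP andP) => [[_ /existsP [[i /= lti] /andP [i1 /forallP occ]]] | [i hi per]].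
  exists i; first lia.
  move=> t it tm; have /eqP := occ (@Ordinal n (t - i) ltac:(lia)).
  by rewrite /= subnKC //; congr (_ = x _); lia.
split; first lia.
apply/existsP; exists (@Ordinal (m - n).+1 i ltac:(lia)); rewrite /= (andP hi).1.
apply/forallP => k; have kn := ltn_ord k; apply/eqP; rewrite per; try lia.
by congr x; lia.
Qed.

Lemma rep_at_r (A : finType) n (x : nat -> A) : rep_at n x (r n x).
Proof. by rewrite /r; case: ex_minnP. Qed.

Lemma r_leq (A : finType) n (x : nat -> A) m : rep_at n x m -> r n x <= m.
Proof. by rewrite /r; case: ex_minnP => ? _; apply. Qed.

Theorem lemma5p4 (A : finType) (x : nat -> A) (n : nat) :
  (2 <= n)%N -> (r (n - 1) x + 2 <= r n x)%N -> (2 * n + 1 <= r n x)%N.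
Proof.
move=> n2 gap; rewrite leqNgt; apply/negP => short.
have /rep_atP [i hi pere] := rep_at_r n x.
have /rep_atP [j hj perd] := rep_at_r (n - 1) x.
set m := r n x in gap short hi pere *; set p := r (n - 1) x in gap hj perd.
set e := m - n + 1 - i in pere; set d := p - (n - 1) + 1 - j in perd.
have g0 : 0 < gcdn d e by rewrite gcdn_gt0; apply/orP; left; lia.
case: (leqP i j) => ij.
- have /(r_leq (m := p.+1)) : rep_at n x p.+1.
    apply/rep_atP; exists j; first lia.
    have -> : p.+1 - n + 1 - j = d by lia.
    by apply: (periodic_on_extend_right _ _ perd pere); lia.
  by rewrite -/m; lia.
- have /(r_leq (m := m.-1)) : rep_at n x m.-1.
    apply/rep_atP; exists i.-1; first lia.
    have -> : m.-1 - n + 1 - i.-1 = e by lia.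
    have perei : periodic_on x e i.-1 m.
      by apply: (periodic_on_extend_left _ _ pere perd); rewrite ?(gcdnC e d); lia.
    exact: periodic_on_sub perei (leqnn _) (leq_pred m).
  by rewrite -/m; lia.
Qed.
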